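(* Let $T$ be a tree with at least $3$ vertices. Then the function $v\mapsto f_{T,v}(v)$ is not constant on $V(T)$.
   Context: For a tree $T$ rooted at $v$, the values $f_{T,v}(w)$, $w\in V(T)$, are defined recursively: if $w$ has no children (no descendants) in the rooted tree, $f_{T,v}(w)=0$; otherwise let $u_0,\dots,u_k$ be the children of $w$, let $T_i$ be the subtree consisting of $u_i$ and all its descendants, rooted at $u_i$, and order them so that $c_i:=f_{T_i,u_i}(u_i)$ satisfy $c_0\ge c_1\ge\cdots\ge c_k$; then $f_{T,v}(w)=\max_{0\le i\le k}(i+c_i)$. *)

From mathcomp Require Import all_boot.
Unset Printing Implicit Defensive.

Definition simple_graph {V : finType} (e : rel V) : Prop :=
  symmetric e /\ irreflexive e.

Definition connected_graph {V : finType} (e : rel V) : Prop :=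
  forall x y : V, connect e x y.

Definition acyclic_graph {V : finType} (e : rel V) : Prop :=
  forall p : seq V, uniq p -> 3 <= size p -> ~~ cycle e p.

Definition is_tree {V : finType} (e : rel V) : Prop :=
  [/\ simple_graph e, connected_graph e & acyclic_graph e].

(* fval e n p w : the value f_{T,v}(w) of the paper, where w is reached from
   its parent p (p = None when w is the root v), computed with fuel n. *)
Fixpoint fval {V : finType} (e : rel V) (n : nat) (p : option V) (w : V) : nat :=
  match n with
  | 0 => 0
  | n'.+1 =>
      let cs := sort geq [seq fval e n' (Some w) u
                          | u <- enum V & e w u && (Some u != p)] in
      \max_(i < size cs) (i + nth 0 cs i)
  end.

(* f_{T,v}(v): the root value of T rooted at v.  Fuel #|V| exceeds the
   depth of any rooted tree on V, so it is the exact value. *)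
Definition rootval {V : finType} (e : rel V) (v : V) : nat :=
  fval e #|V| None v.

(* For an edge pw of the tree let the branch value of w seen from p be the
   value of the component of T - pw containing w, rooted at w.  Following
   heaviest branches one reaches an edge uw whose branch values b (of w seen
   from u) and a (of u seen from w) are both the heaviest at their endpoints.
   Then f(u) = max(b, a+1) and f(w) = max(a, b+1), unless u or w is a leaf;
   as T has a third vertex, max(f(u), f(w)) = max(a, b) + 1 in all cases.
   Walking from u away from w, always into the heaviest branch, never
   increases the larger of the two branch values across the current edge,
   and ends at a leaf l with f(l) <= max(a, b). *)

From mathcomp Require Import all_boot zify.
Unset Printing Implicit Defensive.

Section RankMax.

Let geq_total : total geq. Proof. by move=> m n; exact: leq_total. Qed.
Let geq_trans : transitive geq.
Proof. by move=> m n p /= hnm hpn; exact: leq_trans hpn hnm. Qed.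
Let geq_anti : antisymmetric geq.
Proof. by move=> m n /andP[/= hnm hmn]; apply/eqP; rewrite eqn_leq hnm hmn. Qed.

Definition rank_max (s : seq nat) : nat :=
  let cs := sort geq s in \max_(i < size cs) (i + nth 0 cs i).

Lemma perm_rank_max s t : perm_eq s t -> rank_max s = rank_max t.
Proof. by move=> /(perm_sortP geq_total geq_trans geq_anti) hst; rewrite /rank_max hst. Qed.

Lemma rank_max_nil : rank_max [::] = 0.
Proof. by rewrite /rank_max big_ord0. Qed.

Lemma leq_rank_max x s : x \in s -> x <= rank_max s.
Proof.
rewrite /rank_max -(mem_sort geq); set cs := sort geq s => hx.
have hi : index x cs < size cs by rewrite index_mem.
apply: leq_trans (leq_bigmax (F := fun i : 'I_(size cs) => i + nth 0 cs i) (Ordinal hi)).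
by rewrite /= nth_index // leq_addl.
Qed.

Lemma bigmax_ord_succ n (F : nat -> nat) : 0 < n ->
  \max_(i < n) (F i).+1 = (\max_(i < n) F i).+1.
Proof.
elim: n => // -[_ _ | n IH _]; first by rewrite !big_ord1.
by rewrite big_ord_recr [in RHS]big_ord_recr /= IH // maxnSS.
Qed.

Lemma rank_max_cons_top x s : {in s, forall y, y <= x} ->
  rank_max (x :: s) = if s is [::] then x else maxn x (rank_max s).+1.
Proof.
move=> s_le_x.
have sort_cons : sort geq (x :: s) = x :: sort geq s.
  have -> : sort geq (x :: s) = sort geq (x :: sort geq s).
    by apply/(perm_sortP geq_total geq_trans geq_anti); rewrite perm_cons perm_sym perm_sort.
  apply: sorted_sort; first exact: geq_trans.
  rewrite /= path_sortedE // sort_sorted // andbT.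
  by apply/allP => y; rewrite mem_sort => /s_le_x.
rewrite {1}/rank_max sort_cons /= big_ord_recl /=.
case: s {s_le_x sort_cons} => [|y s]; first by rewrite big_ord0 maxn0.
congr maxn; set cs := sort geq (y :: s).
by rewrite /rank_max -/cs -(@bigmax_ord_succ _ (fun i => i + nth 0 cs i)) ?size_sort //.
Qed.

Lemma rank_max_seq1 x : rank_max [:: x] = x.
Proof. by rewrite rank_max_cons_top. Qed.

Lemma rank_max_cons_lt x s : s != [::] -> {in s, forall y, y <= x} ->
  rank_max s < rank_max (x :: s).
Proof. by case: s => // y s _ /rank_max_cons_top ->; rewrite leq_maxr. Qed.

Lemma rank_max_raise_top x y s : y <= x -> {in s, forall k, k <= y} ->
  rank_max (x :: s) <= maxn x (rank_max (y :: s)).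
Proof.
move=> yx s_le_y; have s_le_x : {in s, forall k, k <= x}.
  by move=> k /s_le_y /leq_trans; apply.
rewrite (rank_max_cons_top _ _ s_le_x) (rank_max_cons_top _ _ s_le_y).
case: s {s_le_x s_le_y} => [|k s]; first exact: leq_maxl.
by rewrite geq_max leq_maxl leq_max leq_maxr orbT.
Qed.

End RankMax.

Lemma perm_map_filter_head (T R : eqType) (h : T -> R) (P : pred T) s q :
  uniq s -> q \in s -> P q ->
  perm_eq [seq h y | y <- s & P y] (h q :: [seq h y | y <- s & P y && (y != q)]).
Proof.
move=> s_uniq qs Pq; rewrite -map_cons; apply: perm_map.
have qPs : q \in [seq y <- s | P y] by rewrite mem_filter Pq qs.
apply: perm_trans (perm_to_rem qPs) _.
rewrite perm_cons rem_filter ?filter_uniq // -filter_predI.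
by apply/permP => a; congr count; apply: eq_filter => y; rewrite /= andbC.
Qed.

Section Tree.

Context {V : finType} {e : rel V}.
Hypothesis tree : is_tree e.

Let e_sym : symmetric e. Proof. by case: tree => -[]. Qed.
Let e_irr : irreflexive e. Proof. by case: tree => -[]. Qed.
Let e_conn : connected_graph e. Proof. by case: tree. Qed.

(* [w :: s] is a walk listed backwards: [ohead s] is the vertex it came from. *)
Lemma tree_uniq_path_cons w s u : uniq (w :: s) -> path e w s -> e w u ->
  Some u != ohead s -> uniq (u :: w :: s).
Proof.
move=> ws_uniq ws_path wu u_new.
rewrite /= -/(uniq (w :: s)) ws_uniq andbT in_cons negb_or.
have -> : u != w by apply: contraTneq wu => ->; rewrite e_irr.
apply/negP; case: s u_new ws_uniq ws_path => [//|p s] p_ne_u ws_uniq ws_path us.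
have {}p_ne_u : u != p by apply: contra p_ne_u => /eqP ->.
set i := index u (p :: s).
have i_lt : i < size (p :: s) by rewrite index_mem.
have take_i := take_nth u i_lt; rewrite nth_index // in take_i.
have i_gt0 : 0 < i by rewrite lt0n /i /= (ifN_eqC _ _ p_ne_u).
case: tree => _ _ /(_ (w :: rcons (take i (p :: s)) u)) acyclic.
apply: (negP (acyclic _ _)).
- rewrite -take_i; move: ws_uniq; rewrite cons_uniq => /andP[w_notin ps_uniq].
  rewrite cons_uniq take_uniq // andbT; apply: contra w_notin; exact: mem_take.
- by rewrite /= size_rcons size_take i_lt.
- by rewrite /cycle rcons_path last_rcons e_sym wu andbT -take_i take_path.
Qed.

(* Every non-backtracking walk from [w] that does not start with [p] has fewer
   than [n] edges; fuel [n] then computes [fval] exactly. *)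
Fixpoint depth_lt (n : nat) (p : option V) (w : V) : Prop :=
  if n is n'.+1 then forall u, e w u -> Some u != p -> depth_lt n' (Some w) u
  else False.

Lemma depth_lt_path n s w : n + size s = #|V| -> uniq (w :: s) -> path e w s ->
  depth_lt n (ohead s) w.
Proof.
elim: n s w => [|n IHn] s w size_s ws_uniq ws_path.
  by have := max_card (mem (w :: s)); rewrite (card_uniqP ws_uniq) -size_s ltnn.
move=> u wu u_new; apply: (IHn (w :: s)).
- by rewrite /= addnS -addSn.
- exact: tree_uniq_path_cons.
- by rewrite /= ws_path e_sym wu.
Qed.

Lemma depth_lt_edge {p w} : e p w -> depth_lt #|V|.-1 (Some p) w.
Proof.
move=> pw; apply: (depth_lt_path _ [:: p]) => /=.
- by rewrite addn1 prednK //; apply/card_gt0P; exists w.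
- by rewrite inE andbT; apply: contraTneq pw => ->; rewrite e_irr.
- by rewrite e_sym pw.
Qed.

Lemma fvalS n p w : fval e n.+1 p w =
  rank_max [seq fval e n (Some w) u | u <- enum V & e w u && (Some u != p)].
Proof. by []. Qed.

Lemma fval_depth_stable {n m p w} :
  depth_lt n p w -> n <= m -> fval e n p w = fval e m p w.
Proof.
elim: n m p w => [//|n IHn] [//|m] p w w_depth le_nm; rewrite !fvalS.
congr rank_max; apply/eq_in_map => u; rewrite mem_filter => /andP[/andP[wu u_new] _].
exact/IHn/le_nm/w_depth.
Qed.

Lemma edge_walk_ind (Q : V -> V -> Prop) (R : Prop) :
  (forall p x, e p x -> Q p x -> R \/ exists z, [/\ e x z, z != p & Q x z]) ->
  forall p x, e p x -> Q p x -> R.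
Proof.
move=> step p x px; have := depth_lt_edge px.
elim: #|V|.-1 p x px => [//|n IHn] p x px x_depth Qpx.
case: (step p x px Qpx) => [//|[z [xz zp Qxz]]].
exact/(IHn x z xz)/Qxz/x_depth.
Qed.

Lemma card_le_closed (s : seq V) x : x \in s ->
  (forall y z, e y z -> y \in s -> z \in s) -> #|V| <= size s.
Proof.
move=> xs s_closed.
have s_cl : closed e [pred y | y \in s].
  exact: intro_closed (sym_connect_sym e_sym) _ _.
apply: leq_trans (card_size s); apply: subset_leq_card; apply/subsetP => y _.
by have := closed_connect s_cl (e_conn x y); rewrite !inE xs => <-.
Qed.

Lemma exists_edge : 1 < #|V| -> exists u w, e u w.
Proof.
move=> V_gt1; have [u _] : exists u, u \in V by apply/card_gt0P; exact: ltnW.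
case: (pickP (e u)) => [w uw | no_nbr]; first by exists u, w.
suff : #|V| <= size [:: u] by rewrite leqNgt V_gt1.
apply: card_le_closed (mem_head u [::]) _ => y z yz; rewrite inE => /eqP yu.
by rewrite yu no_nbr in yz.
Qed.

(* [branch p w] is f_{T', w}(w) for the component T' of T - pw containing w. *)
Definition branch (p w : V) : nat := fval e #|V|.-1 (Some p) w.

Definition child_branches (p w : V) : seq nat :=
  [seq branch w u | u <- enum V & e w u && (u != p)].

Definition max_branch (v w : V) : Prop := forall y, e v y -> branch v y <= branch v w.

Lemma branchE {p w} : e p w -> branch p w = rank_max (child_branches p w).
Proof.
move=> pw; rewrite /child_branches /branch.
rewrite (fval_depth_stable (depth_lt_edge pw) (leq_pred _)).
have : 0 < #|V| by apply/card_gt0P; exists w.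
by case: #|V|.
Qed.

Lemma rootval_branches v :
  rootval e v = rank_max [seq branch v u | u <- enum V & e v u].
Proof.
rewrite /rootval /branch; have : 0 < #|V| by apply/card_gt0P; exists v.
case: #|V| => // n _; rewrite fvalS.
by congr (rank_max (map _ _)); apply: eq_filter => u; rewrite andbT.
Qed.

Lemma rootval_edge {v w} :
  e v w -> rootval e v = rank_max (branch v w :: child_branches w v).
Proof.
move=> vw; rewrite rootval_branches; apply/perm_rank_max.
by apply: perm_map_filter_head; rewrite ?enum_uniq ?mem_enum.
Qed.

Lemma child_branches_split {p q x} : e x q -> q != p ->
  perm_eq (child_branches p x)
          (branch x q :: [seq branch x y | y <- enum V & [&& e x y, y != p & y != q]]).
Proof.
move=> xq qp; rewrite (@eq_filter _ _ (fun y => (e x y && (y != p)) && (y != q))).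
  by apply: perm_map_filter_head; rewrite ?enum_uniq ?mem_enum ?xq.
by move=> y; rewrite andbA.
Qed.

Lemma mem_child_branches {p x y} :
  e x y -> y != p -> branch x y \in child_branches p x.
Proof. by move=> xy yp; apply: map_f; rewrite mem_filter xy yp mem_enum. Qed.

Lemma child_branches_nil p x : child_branches p x = [::] <-> (forall y, e x y -> y = p).
Proof.
split=> [px_nil y xy | only_p].
  by apply/eqP; apply: contraT => yp; have := mem_child_branches xy yp; rewrite px_nil.
rewrite /child_branches (@eq_filter _ _ pred0) ?filter_pred0 // => y /=.
by apply/negP => /andP[/only_p ->]; rewrite eqxx.
Qed.

Lemma branch_child_leq {p x y} : e p x -> e x y -> y != p -> branch x y <= branch p x.
Proof.
by move=> px xy yp; rewrite (branchE px); exact/leq_rank_max/mem_child_branches.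
Qed.

Lemma max_branch_child_branches {v w} :
  max_branch v w -> {in child_branches w v, forall k, k <= branch v w}.
Proof.
move=> vw_max _ /mapP[y + ->]; rewrite mem_filter => /andP[/andP[vy _] _].
exact: vw_max.
Qed.

Lemma rootval_gt_branch {u w} : e u w -> max_branch u w -> child_branches w u != [::] ->
  branch w u < rootval e u.
Proof.
move=> uw uw_max u_inner; have wu : e w u by rewrite e_sym.
rewrite (rootval_edge uw) (branchE wu).
exact/rank_max_cons_lt/max_branch_child_branches.
Qed.

Lemma exists_max_branch_edge {p x} : e p x ->
  exists u w, [/\ e u w, max_branch u w & max_branch w u].
Proof.
move=> px; case: (arg_maxnP (branch p) px) => x0 px0 x0_max.
apply: (edge_walk_ind max_branch _ _ _ _ px0 x0_max).
move=> {p x px x0 px0 x0_max} p x px px_max.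
have xp : e x p by rewrite e_sym.
case: (arg_maxnP (branch x) xp) => z xz z_max.
case: (eqVneq z p) => [zp | zp]; last by right; exists z.
by left; exists p, x; split=> //; rewrite -zp.
Qed.

Lemma max_branch_descend {p x z} : e p x -> max_branch x p -> e x z -> z != p ->
  (forall y, e x y -> y != p -> branch x y <= branch x z) ->
  max_branch z x /\ maxn (branch z x) (branch x z) <= maxn (branch x p) (branch p x).
Proof.
move=> px xp_max xz zp z_max; have zx : e z x by rewrite e_sym.
have xp : e x p by rewrite e_sym.
have pz : p != z by rewrite eq_sym.
split=> [y zy | ].
  case: (eqVneq y x) => [-> // | yx].
  apply: leq_trans (branch_child_leq xz zy yx) _.
  exact: leq_trans (xp_max z xz) (branch_child_leq zx xp pz).
set K := [seq branch x y | y <- enum V & [&& e x y, y != p & y != z]].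
have zx_K : branch z x = rank_max (branch x p :: K).
  rewrite (branchE zx); apply/perm_rank_max.
  apply: perm_trans (child_branches_split xp pz) _; rewrite perm_cons /K.
  suff -> : [seq y <- enum V | [&& e x y, y != z & y != p]] =
            [seq y <- enum V | [&& e x y, y != p & y != z]] by [].
  by apply: eq_filter => y; rewrite (andbC (y != z)).
have px_K : branch p x = rank_max (branch x z :: K).
  by rewrite (branchE px); apply/perm_rank_max/child_branches_split.
have K_le_z : {in K, forall k, k <= branch x z}.
  move=> _ /mapP[y + ->]; rewrite mem_filter => /andP[/and3P[xy yp _] _].
  exact: z_max.
rewrite geq_max (leq_trans (xp_max z xz) (leq_maxl _ _)) andbT zx_K px_K.
exact: rank_max_raise_top (xp_max z xz) K_le_z.
Qed.

Lemma exists_low_leaf {p x} : e x p -> max_branch x p ->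
  exists l, rootval e l <= maxn (branch x p) (branch p x).
Proof.
move=> xp xp_max; have px : e p x by rewrite e_sym.
suff low M : maxn (branch x p) (branch p x) <= M -> exists l, rootval e l <= M by exact: low.
move=> xp_M.
pose Q p x := max_branch x p /\ maxn (branch x p) (branch p x) <= M.
apply: (edge_walk_ind Q _ _ _ _ px (conj xp_max xp_M)).
move=> {p x xp px xp_max xp_M} p x px [xp_max xp_M].
case: (pickP (fun y => e x y && (y != p))) => [y0 y0_child | x_leaf].
  right; have := @arg_maxnP _ y0 (fun y => e x y && (y != p)) (branch x) y0_child.
  case=> z /andP[xz zp] z_max.
  have z_max' y : e x y -> y != p -> branch x y <= branch x z.
    by move=> xy yp; apply: z_max; rewrite xy yp.
  have [zx_max zx_M] := max_branch_descend px xp_max xz zp z_max'.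
  by exists z; split=> //; split=> //; exact: leq_trans zx_M xp_M.
left; exists x; have xp : e x p by rewrite e_sym.
rewrite (rootval_edge xp); have /child_branches_nil -> : forall y, e x y -> y = p.
  by move=> y xy; apply/eqP; apply: contraFT (x_leaf y) => yp; rewrite xy.
rewrite rank_max_seq1.
exact: leq_trans (leq_maxl _ _) xp_M.
Qed.

Lemma max_branches_lt_rootval {u w} : 2 < #|V| -> e u w ->
  max_branch u w -> max_branch w u ->
  maxn (branch u w) (branch w u) < maxn (rootval e u) (rootval e w).
Proof.
move=> V_gt2 uw uw_max wu_max; have wu : e w u by rewrite e_sym.
have leaf_branch0 p x : e p x -> child_branches p x = [::] -> branch p x = 0.
  by move=> px /(congr1 rank_max); rewrite rank_max_nil -branchE.
have [u_leaf | u_inner] := eqVneq (child_branches w u) [::];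
have [w_leaf | w_inner] := eqVneq (child_branches u w) [::].
- move/child_branches_nil: u_leaf => u_only; move/child_branches_nil: w_leaf => w_only.
  suff : #|V| <= size [:: u; w] by rewrite leqNgt V_gt2.
  apply: card_le_closed (mem_head u _) _ => y z yz; rewrite !inE.
  case/orP=> /eqP y_eq; subst y; first by rewrite (u_only z yz) eqxx orbT.
  by rewrite (w_only z yz) eqxx.
- have := rootval_gt_branch wu wu_max w_inner; rewrite (leaf_branch0 _ _ wu u_leaf); lia.
- have := rootval_gt_branch uw uw_max u_inner; rewrite (leaf_branch0 _ _ uw w_leaf); lia.
- have := rootval_gt_branch uw uw_max u_inner; have := rootval_gt_branch wu wu_max w_inner.
  lia.
Qed.

End Tree.

Theorem proposition4p4 (V : finType) (e : rel V) :
  is_tree e -> 3 <= #|V| -> exists u v : V, rootval e u <> rootval e v.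
Proof.
move=> tree V_gt2.
have [p [x px]] := exists_edge tree (ltnW V_gt2).
have [u [w [uw uw_max wu_max]]] := exists_max_branch_edge tree px.
have [l l_low] := exists_low_leaf tree uw uw_max.
have := max_branches_lt_rootval tree V_gt2 uw uw_max wu_max.
case: (leqP (rootval e u) (rootval e w)) => _ ?; [exists l, w | exists l, u]; lia.
Qed.
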